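(* Let $\mathcal G$ be a DAG, $\mathbf Y$ a vertex set, $\boldsymbol\alpha$ a proper set of directed paths live for $\mathbf Y$, and $\pi_{\mathfrak a_{\boldsymbol\alpha}}$ a path intervention that is natural for $\mathbf Y$, with $\boldsymbol\alpha^*\subseteq\boldsymbol\alpha$ the set of all paths assigned constant values by $\pi$. Then $p(\mathbf Y(\mathfrak a_{\boldsymbol\alpha}))=p(\mathbf Y(\mathfrak a_{\boldsymbol\alpha^*}))$, where $\mathfrak a_{\boldsymbol\alpha^*}$ is the restriction of $\mathfrak a_{\boldsymbol\alpha}$ to $\boldsymbol\alpha^*$.
   Context: Let $\mathcal G$ be a DAG with finite vertex set $\mathbf V$; vertices are random variables with state spaces $\mathfrak X_V$; $\mathrm{pa}(V)$ are parents. A causal structure is a collection of one-step potential outcomes $V(\mathbf b)$, $\mathbf b\in\prod_{W\in\mathrm{pa}(V)}\mathfrak X_W$, with a joint distribution; other counterfactuals are defined by recursive substitution, and the natural (observed) value of $V$ is the response to no intervention. A directed path is $A_1\to\cdots\to A_k$ with distinct vertices (source $A_1$, sink $A_k$); subpaths are contiguous; prefix subpaths contain the source. A set of paths is proper if none is a prefix subpath of another. A path intervention on a proper set $\boldsymbol\alpha$ assigns to each path $\alpha$ with source $A$ an element of the extended state space $\mathfrak X_A\cup\{A\}$: either a constant value of $A$ or the natural value $A$ (the observed variable). Funnel operator $\lhd_{(WY)}$: replace each path $(A\ldots WY)$ by $(A\ldots W)$, delete every other path containing $W$, keep the rest; the funneled assignment keeps assignments and gives $(A\ldots W)$ the assignment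 of $(A\ldots WY)$. Response: $V(\mathfrak a_{\boldsymbol\alpha})=V(\mathfrak a_{\{(WV)\in\boldsymbol\alpha\}},\{W(\mathfrak a_{\lhd_{(WV)}(\boldsymbol\alpha)}):W\in\mathrm{pa}(V),(WV)\notin\boldsymbol\alpha\})$ recursively, where a parent $W$ whose single-edge path $(WV)$ is in $\boldsymbol\alpha$ is set to its assigned constant, or to the natural variable $W$ if assigned the natural value. A directed path $\gamma$ with sink in $\mathbf Y$ is relevant for $\mathbf Y$ given a set of paths $\boldsymbol\beta$ if no path of $\boldsymbol\beta$ is a subpath of $\gamma$ except possibly a prefix subpath; $\mathrm{rel}_{\mathcal G}(\mathbf Y\mid\boldsymbol\beta)$ is their set. $\boldsymbol\alpha$ is live for $\mathbf Y$ if every $\alpha\in\boldsymbol\alpha$ is a prefix subpath of some element of $\mathrm{rel}_{\mathcal G}(\mathbf Y\mid\boldsymbol\alpha)$. With $\boldsymbol\alpha$ live for $\mathbf Y$ and $\boldsymbol\alpha^*$ the paths assigned constants (the rest natural values), $\pi$ is natural for $\mathbf Y$ if no element of $\mathrm{rel}_{\mathcal G}(\mathbf Y\mid\boldsymbol\alpha^* )$ that has a prefix subpath in $\boldsymbol\alpha^*$ contains a subpath in $\boldsymbol\alpha\setminus\boldsymbol\alpha^*$. *)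

From HB Require Import structures.
From mathcomp Require Import all_boot all_order.


Set Implicit Arguments.
Unset Strict Implicit.
Unset Printing Implicit Defensive.

Definition acyclic (V : finType) (e : rel V) : Prop :=
  forall u x : V, e u x -> ~~ connect e x u.

Record dag (V : finType) := Dag { dedge : rel V; dacyclic : acyclic dedge }.

Definition anc (V : finType) (e : rel V) (v : V) : {set V} :=
  [set u | [exists x, e u x && connect e x v]].

Lemma anc_proper (V : finType) (G : dag V) (w v : V) :
  dedge G w v -> anc (dedge G) w \proper anc (dedge G) v.
Proof.
move=> Hwv; apply/properP; split.
  apply/subsetP=> u; rewrite !inE => /existsP [x /andP [Hux Hxw]].
  apply/existsP; exists x; rewrite Hux /=.
  apply: connect_trans Hxw _; exact: connect1.
exists w; rewrite !inE.
  by apply/existsP; exists v; rewrite Hwv connect0.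
apply/negP=> /existsP [x /andP [Hwx Hxw]].
by move: (dacyclic Hwx); rewrite Hxw.
Qed.
Lemma dag_wf (V : finType) (G : dag V) :
  well_founded (fun w v : V => dedge G w v).
Proof.
move=> v.
have [n] := ubnP #|anc (dedge G) v|; elim: n v => [v H|n IH v Hv].
  by rewrite ltn0 in H.
constructor=> w Hwv; apply: IH.
have H := proper_card (anc_proper Hwv).
by rewrite -ltnS; apply: leq_trans Hv.
Qed.

Definition dpath (V : finType) (G : dag V) (s : seq V) : bool :=
  if s is x :: t then path (dedge G) x t && uniq s else false.

(* subpath = contiguous subsequence (seq.infix); prefix subpath = seq.prefix *)

Definition proper_paths (V : finType) (al : seq (seq V)) : Prop :=
  forall a b, a \in al -> b \in al -> a != b -> ~~ prefix a b.

Definition relevant (V : finType) (G : dag V) (Y : {set V})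
    (beta : seq (seq V)) (gamma : seq V) : Prop :=
  [/\ dpath G gamma, (if gamma is x :: t then last x t \in Y else false)
    & forall b, b \in beta -> infix b gamma -> prefix b gamma].

Definition live (V : finType) (G : dag V) (Y : {set V}) (al : seq (seq V)) : Prop :=
  forall a, a \in al -> exists gamma, relevant G Y al gamma /\ prefix a gamma.

(* an assigned path: source [psrc], remaining vertices [ptail], and an
   element of the extended state space X_A u {A}:
   [Some c] = the constant c, [None] = the natural value of the source *)
Record pitem (V : finType) (X : V -> Type) :=
  PItem { psrc : V; ptail : seq V; pval : option (X psrc) }.

Definition ppath (V : finType) (X : V -> Type) (i : pitem X) : seq V :=
  psrc i :: ptail i.

Definition paths_of (V : finType) (X : V -> Type) (pi : seq (pitem X)) :=
  map (@ppath V X) pi.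

Definition is_const (V : finType) (X : V -> Type) (i : pitem X) : bool :=
  if pval i is Some _ then true else false.

Definition const_part (V : finType) (X : V -> Type) (pi : seq (pitem X)) :=
  filter (@is_const V X) pi.

Definition path_intervention (V : finType) (G : dag V) (X : V -> Type)
    (pi : seq (pitem X)) : Prop :=
  [/\ all (fun i => dpath G (ppath i) && (1 < size (ppath i))) pi,
      uniq (paths_of pi)
    & proper_paths (paths_of pi)].

Definition ends_with (V : finType) (s : seq V) (w y : V) : bool :=
  (1 < size s) && (nth w s (size s).-2 == w) && (last w s == y).

Definition funnel_item (V : finType) (X : V -> Type) (w y : V) (i : pitem X)
  : seq (pitem X) :=
  if ends_with (ppath i) w y then
    [:: @PItem _ _ (psrc i) (take (size (ptail i)).-1 (ptail i)) (pval i)]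
  else if w \in ppath i then [::] else [:: i].

Definition funnel (V : finType) (X : V -> Type) (w y : V) (pi : seq (pitem X)) :=
  flatten (map (funnel_item w y) pi).

Fixpoint lookup_edge (V : finType) (X : V -> Type) (pi : seq (pitem X)) (w v : V)
  : option (option (X w)) :=
  match pi with
  | [::] => None
  | i :: pi' =>
      if ptail i == [:: v] then
        match psrc i =P w with
        | ReflectT e => Some (ecast z (option (X z)) e (pval i))
        | ReflectF _ => lookup_edge pi' w v
        end
      else lookup_edge pi' w v
  end.

Definition parents (V : finType) (G : dag V) (v : V) := {w : V | dedge G w v}.

(* one-step potential outcomes V(b), b a value of the parents, as random
   variables on a sample space Omega *)
Definition causal_structure (V : finType) (G : dag V) (X : V -> Type) (Omega : Type) :=
  forall v : V, (forall w : parents G v, X (val w)) -> Omega -> X v.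

Section Response.
Variables (V : finType) (G : dag V) (X : V -> Type) (Omega : Type)
  (po : causal_structure G X Omega).

Definition response_step (v : V)
    (rec : forall w : V, dedge G w v -> seq (pitem X) -> Omega -> X w)
    (pi : seq (pitem X)) (om : Omega) : X v :=
  po (fun w : parents G v =>
        match lookup_edge pi (val w) v with
        | Some (Some c) => c
        | Some None => rec (val w) (valP w) [::] om
        | None => rec (val w) (valP w) (funnel (val w) v pi) om
        end) om.

Definition response : forall v : V, seq (pitem X) -> Omega -> X v :=
  Fix (dag_wf G) (fun v => seq (pitem X) -> Omega -> X v) response_step.

End Response.

Definition natural_for (V : finType) (G : dag V) (X : V -> Type) (Y : {set V})
    (pi : seq (pitem X)) : Prop :=
  let al := paths_of pi in
  let als := paths_of (const_part pi) in
  forall gamma, relevant G Y als gamma ->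
    (exists2 a, a \in als & prefix a gamma) ->
    forall b, b \in al -> b \notin als -> ~~ infix b gamma.

Definition Yresponse (V : finType) (G : dag V) (X : V -> Type) (Omega : Type)
    (po : causal_structure G X Omega) (Y : {set V}) (pi : seq (pitem X))
    (om : Omega) : forall y : {y : V | y \in Y}, X (val y) :=
  fun y => response po (val y) pi om.
Arguments Yresponse {V G X Omega} po Y pi om.
Arguments response {V G X Omega} po v pi om.

From HB Require Import structures.
From mathcomp Require Import all_boot all_order.
From mathcomp Require Import boolp classical_sets reals measure probability.

(* The response of a vertex [v] depends on the intervention only through the
   constants that reach [v] along backward walks [w, u_k, ..., u_1, v]: the
   constant assigned to [w u_k ... u_1 v], provided no shorter path
   [u_j ... u_1 v] is assigned at all.  Funneling along an edge shifts these
   walks by one step, so interventions with the same such data have the same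
   response, by well-founded induction on the DAG.  Liveness forbids an
   assigned path to end with a proper suffix that is itself assigned, so the
   walks blocked by a path assigned the natural value would not have reached
   a constant anyway, and deleting all such paths leaves the data unchanged.  Hence [Y(a_alpha)] and [Y(a_alpha^* )] agree
   pointwise, which is stronger than equality in distribution. *)

Set Implicit Arguments.
Unset Strict Implicit.
Unset Printing Implicit Defensive.

Section PathAssignments.
Variables (V : finType) (X : V -> Type).
Implicit Types (S T : seq (pitem X)) (i : pitem X).

Fixpoint assignment S (w : V) (t : seq V) : option (option (X w)) :=
  match S with
  | [::] => None
  | i :: S' =>
      if ptail i == t then
        match psrc i =P w with
        | ReflectT e => Some (ecast z (option (X z)) e (pval i))
        | ReflectF _ => assignment S' w t
        end
      else assignment S' w t
  end.

Lemma lookup_edgeE S w v : lookup_edge S w v = assignment S w [:: v].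
Proof. by elim: S => //= i S ->. Qed.

Lemma assignment_cat S T w t :
  assignment (S ++ T) w t =
  if assignment S w t is Some o then Some o else assignment T w t.
Proof. by elim: S => //= i S IH; case: ifP => _ //; case: (psrc i =P w). Qed.

Lemma assignment_Some S w t o : assignment S w t = Some o -> w :: t \in paths_of S.
Proof.
elim: S => //= i S IH; rewrite inE.
case: ifP => [/eqP t_eq|_ /IH ->]; last by rewrite orbT.
by case: (psrc i =P w) => [e _|_ /IH ->]; rewrite ?orbT // /ppath e t_eq eqxx.
Qed.

Lemma assignment_notin S w t : w :: t \notin paths_of S -> assignment S w t = None.
Proof. by case E: (assignment S w t) => [o|] //; rewrite (assignment_Some E). Qed.

Lemma assignment_funnel_item i u v w a :
  assignment (funnel_item u v i) w (rcons a u) =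
  assignment [:: i] w (rcons (rcons a u) v).
Proof.
case: i => s t o; rewrite /funnel_item /ppath /=.
case: ifP => [|not_end].
  case: t / lastP => [|t z]; first by rewrite /ends_with.
  rewrite /ends_with /= last_rcons => /andP [_ /eqP ->] /=.
  by rewrite size_rcons /= -cats1 take_size_cat // cats1 eqseq_rcons eqxx andbT.
case: ifP => u_in /=.
  case: ifP => // /eqP t_eq; move: not_end.
  rewrite t_eq /ends_with /= !size_rcons /=.
  by rewrite nth_rcons size_rcons ltnSn nth_rcons ltnn !eqxx last_rcons eqxx.
have not_in b : u \in b -> (t == b) = false.
  by move=> ub; apply: contraFF u_in => /eqP ->; rewrite inE ub orbT.
have u_rcons b : u \in rcons b u by rewrite mem_rcons mem_head.
by rewrite !not_in // mem_rcons in_cons u_rcons orbT.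
Qed.

Lemma assignment_funnel S u v w a :
  assignment (funnel u v S) w (rcons a u) = assignment S w (rcons (rcons a u) v).
Proof.
elim: S => // i S IH.
rewrite [funnel _ _ _]/= assignment_cat assignment_funnel_item IH.
by rewrite -[i :: S]cat1s assignment_cat.
Qed.

Lemma mem_paths_const_part S : {subset paths_of (const_part S) <= paths_of S}.
Proof.
by apply/mem_subseq; rewrite /paths_of /const_part filter_mask map_mask mask_subseq.
Qed.

Lemma assignment_const_part S w t :
  uniq (paths_of S) ->
  assignment (const_part S) w t =
  if assignment S w t is Some (Some c) then Some (Some c) else None.
Proof.
elim: S => //= [[s tl o]] S IH /andP [i_notin uniqS].
rewrite /const_part /= -/(const_part S).
case: o i_notin => [c|] i_notin /=; case: ifP => [/eqP tl_eq|_]; rewrite ?IH //;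
  case: (s =P w) => [e|_]; rewrite ?IH //; clear IH.
- by case: w / e.
- rewrite assignment_notin; first by case: w / e.
  by rewrite /ppath /= e tl_eq in i_notin.
Qed.

(* The constant assigned to the path [w :: catrev r t], provided no path
   strictly between [t] and it along the walk [r] is assigned at all. *)
Fixpoint walk_const S (t r : seq V) (w : V) : option (X w) :=
  match r with
  | [::] => if assignment S w t is Some (Some c) then Some c else None
  | u :: r' => if assignment S u t is None then walk_const S (u :: t) r' w else None
  end.

Lemma walk_const_nil t r w : walk_const [::] t r w = None.
Proof. by elim: r t => //= u r IH t. Qed.

Lemma walk_const_funnel S u v a r w :
  walk_const (funnel u v S) (rcons a u) r w = walk_const S (rcons (rcons a u) v) r w.
Proof.
elim: r a => [|x r IH] a /=; rewrite assignment_funnel //.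
by case: (assignment S x _) => //; exact: (IH (x :: a)).
Qed.

Lemma walk_const_Some S t r w c :
  walk_const S t r w = Some c -> w :: catrev r t \in paths_of S.
Proof.
elim: r t => [|u r IH] t /=; last by case: (assignment S u t) => // /IH.
by case E: (assignment S w t) => [[c'|]|] // _; exact: assignment_Some E.
Qed.

End PathAssignments.

Lemma live_suffix (V : finType) (G : dag V) (Y : {set V}) (al : seq (seq V))
    (a t : seq V) (u : V) :
  live G Y al -> a ++ u :: t \in al -> u :: t \in al -> a = [::].
Proof.
move=> liveY /liveY [g [[dpath_g _ rel_g] /prefixP [s g_eq]]] ut_in.
have /prefixP [s' g_eq'] : prefix (u :: t) g.
  by apply: rel_g ut_in _; apply/infixP; exists a, s; rewrite g_eq catA.
case: a g_eq => // x a g_eq; move: dpath_g; rewrite g_eq /dpath => /andP [_].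
have -> : x = u by move: g_eq'; rewrite g_eq; case.
by rewrite /= !mem_cat mem_head orbT.
Qed.

Lemma walk_const_const_part (V : finType) (G : dag V) (Y : {set V}) (X : V -> Type)
    (S : seq (pitem X)) (t r : seq V) (w : V) :
  uniq (paths_of S) -> live G Y (paths_of S) ->
  walk_const S t r w = walk_const (const_part S) t r w.
Proof.
move=> uniqS liveS; elim: r t => [|u r IH] t /=.
  by rewrite assignment_const_part //; case: (assignment S w t) => [[c|]|].
rewrite assignment_const_part //.
case ut: (assignment S u t) => [o|]; last exact: IH.
have walk_None : walk_const (const_part S) (u :: t) r w = None.
  case E: walk_const => [c|] //; have := mem_paths_const_part (walk_const_Some E).
  rewrite catrevE -cat_cons => /(live_suffix liveS)/(_ (assignment_Some ut)).
  by case: (rev r).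
by case: o ut.
Qed.

Unset Implicit Arguments.

Section Response.
Variables (V : finType) (G : dag V) (X : V -> Type) (Omega : Type)
  (po : causal_structure G X Omega).

Lemma responseE v S om :
  response po v S om =
  po v (fun w : parents G v =>
        match lookup_edge S (val w) v with
        | Some (Some c) => c
        | Some None => response po (val w) [::] om
        | None => response po (val w) (funnel (val w) v S) om
        end) om.
Proof.
rewrite /response Fix_eq // => x f g fg; apply/funext => S'; apply/funext => om'.
by congr po; apply: functional_extensionality_dep => w; rewrite !fg.
Qed.

Lemma eq_response v S S' :
  (forall r w, walk_const S [:: v] r w = walk_const S' [:: v] r w) ->
  response po v S =1 response po v S'.
Proof.
elim/(well_founded_ind (dag_wf G)): v S S' => v IH S S' eq_walk om.
rewrite !responseE; congr po; apply: functional_extensionality_dep => w.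
have funnelE T : assignment T (val w) [:: v] = None -> forall r z,
    walk_const (funnel (val w) v T) [:: val w] r z = walk_const T [:: v] (val w :: r) z.
  by move=> T_wv r z /=; rewrite T_wv (walk_const_funnel T (val w) v [::]).
have := eq_walk [::] (val w); rewrite !lookup_edgeE /=.
case E: (assignment S (val w) [:: v]) => [[c|]|];
  case E': (assignment S' (val w) [:: v]) => [[c'|]|] //=; first by case.
all: move=> _; apply: (IH _ (valP w)) => r z; rewrite ?walk_const_nil ?funnelE //.
- by rewrite -eq_walk /= E.
- by rewrite eq_walk /= E'.
Qed.

End Response.

Local Open Scope classical_set_scope.

Theorem lemma5
  (d : measure_display) (Omega : measurableType d) (R : realType)
  (P : probability Omega R)
  (V : finType) (G : dag V) (X : V -> Type)
  (po : causal_structure G X Omega)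
  (Y : {set V}) (pi : seq (pitem X)) :
  path_intervention G pi ->
  live G Y (paths_of pi) ->
  natural_for G Y pi ->
  forall A : set (forall y : {y : V | y \in Y}, X (val y)),
    measurable [set om | A (Yresponse po Y pi om)] ->
    measurable [set om | A (Yresponse po Y (const_part pi) om)] ->
    P [set om | A (Yresponse po Y pi om)] =
    P [set om | A (Yresponse po Y (const_part pi) om)].
Proof.
move=> [_ uniq_pi _] live_pi _ A _ _.
have Yresponse_const_part om :
    Yresponse po Y pi om = Yresponse po Y (const_part pi) om.
  apply: functional_extensionality_dep => y.
  by apply: eq_response => r w; exact: walk_const_const_part uniq_pi live_pi.
suff -> : [set om | A (Yresponse po Y pi om)] =
          [set om | A (Yresponse po Y (const_part pi) om)] by [].
by apply: eq_set => om; rewrite Yresponse_const_part.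
Qed.
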